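(* Let $X$ and $Y$ be finitely dominated sequence classes such that $Y$ is finitely injective and $\mathcal L_{X;Y}$ (with norm $\|\cdot\|_{X;Y}$) is a Banach operator ideal. Then $\mathcal L_{X;Y}$ is injective: whenever $T\in\mathcal L(E;F)$ and $i:F\to G$ is a metric injection with $i\circ T\in\mathcal L_{X;Y}(E;G)$, then $T\in\mathcal L_{X;Y}(E;F)$ and $\|T\|_{X;Y}=\|i\circ T\|_{X;Y}$.
   Context: A sequence class is a rule $X$ assigning to each Banach space $E$ a Banach space $X(E)$, a linear subspace of $E^{\mathbb{N}}$, with $c_{00}(E)\subseteq X(E)\subseteq\ell_\infty(E)$, $\|\cdot\|_\infty\le\|\cdot\|_{X(E)}$, and $\|x\cdot e_j\|_{X(E)}=\|x\|$ ($x\cdot e_j$ is the sequence with $x$ in coordinate $j$, $0$ elsewhere; finite families $(x_j)_{j=1}^k$ are identified with $(x_1,\dots,x_k,0,\dots)$). $T\in\mathcal L_{X;Y}(E;F)$ if $(T(x_j))\in Y(F)$ for all $(x_j)\in X(E)$, with $\|T\|_{X;Y}$ the norm of $(x_j)\mapsto(T(x_j))$ from $X(E)$ to $Y(F)$. Finitely determined: $(x_j)\in X(E)$ iff $\sup_k\|(x_j)_{j=1}^k\|_{X(E)}<\infty$, norm equal to that sup. Finitely dominated: there is a finitely determined sequence class $Z$ with $X(E)$ a closed subspace of $Z(E)$ for all $E$ and either (I) $(x_j)\in Z(E)$ lies in $X(E)$ iff $\lim_k\|(x_j)_{j=k}^\infty\|_{Z(E)}=0$, or (II) iff $\lim_{k,l}\|(x_j)_{j=k}^l\|_{Z(E)}=0$.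 Finitely injective: $\|(x_j)_{j=1}^k\|_{X(E)}\le\|(i(x_j))_{j=1}^k\|_{X(G)}$ for every metric injection (linear isometric embedding) $i:E\to G$, $k\in\mathbb{N}$, $x_1,\dots,x_k\in E$. *)

From HB Require Import structures.
From mathcomp Require Import all_boot all_order all_algebra.
From mathcomp Require Import all_classical all_reals all_analysis.
Unset Strict Implicit. Unset Printing Implicit Defensive.
Import Order.TTheory GRing.Theory Num.Theory.
Import numFieldNormedType.Exports.
Local Open Scope classical_set_scope.
Local Open Scope ring_scope.

Section SeqClasses.
Context {R : realType}.

Definition is_lin {E F : normedModType R} (T : E -> F) : Prop :=
  forall (a : R) (x y : E), T (a *: x + y) = a *: T x + T y.

(* T \in L(E;F): continuous (= bounded) linear operator *)
Definition bounded_op {E F : normedModType R} (T : E -> F) : Prop :=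
  is_lin T /\ continuous T.

Definition opnorm {E F : normedModType R} (T : E -> F) : \bar R :=
  ereal_sup [set (`|T x|)%:E | x in [set x : E | `|x| <= 1]].

Definition metric_injection {E G : normedModType R} (i : E -> G) : Prop :=
  is_lin i /\ forall x, `|i x| = `|x|.

(* ---------- sequences (indices start at 0) ---------- *)
(* (x_j)_{j=1}^k identified with (x_1,...,x_k,0,0,...) *)
Definition trunc {E : normedModType R} (k : nat) (x : nat -> E) : nat -> E :=
  fun j => if (j < k)%N then x j else 0.
(* (x_j)_{j=k}^oo identified with (0,...,0,x_k,x_{k+1},...) *)
Definition tail {E : normedModType R} (k : nat) (x : nat -> E) : nat -> E :=
  fun j => if (j < k)%N then 0 else x j.
(* (x_j)_{j=k}^l identified with (0,...,0,x_k,...,x_l,0,...) *)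
Definition block {E : normedModType R} (k l : nat) (x : nat -> E) : nat -> E :=
  fun j => if (k <= j <= l)%N then x j else 0.
Definition unitseq {E : normedModType R} (v : E) (j : nat) : nat -> E :=
  fun n => if n == j then v else 0.

Record seq_class := SeqClass {
  sc_mem : forall E : completeNormedModType R, set (nat -> E);
  sc_norm : forall E : completeNormedModType R, (nat -> E) -> R;
  sc_mem0 : forall E, sc_mem E (fun _ => 0);
  sc_memD : forall E x y, sc_mem E x -> sc_mem E y ->
    sc_mem E (fun j => x j + y j);
  sc_memZ : forall E (a : R) x, sc_mem E x -> sc_mem E (fun j => a *: x j);
  sc_norm_ge0 : forall E x, sc_mem E x -> 0 <= sc_norm E x;
  sc_norm_eq0 : forall E x, sc_mem E x -> sc_norm E x = 0 -> x = (fun _ => 0);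
  sc_normZ : forall E (a : R) x, sc_mem E x ->
    sc_norm E (fun j => a *: x j) = `|a| * sc_norm E x;
  sc_normD : forall E x y, sc_mem E x -> sc_mem E y ->
    sc_norm E (fun j => x j + y j) <= sc_norm E x + sc_norm E y;
  sc_complete : forall (E : completeNormedModType R) (u : nat -> nat -> E), (forall n, sc_mem E (u n)) ->
    (forall eps : R, 0 < eps -> exists N, forall m n, (N <= m)%N -> (N <= n)%N ->
       sc_norm E (fun j => u m j - u n j) < eps) ->
    exists x, sc_mem E x /\
      forall eps : R, 0 < eps -> exists N, forall n, (N <= n)%N ->
        sc_norm E (fun j => u n j - x j) < eps;
  sc_c00 : forall (E : completeNormedModType R) (x : nat -> E), (exists N, forall j, (N <= j)%N -> x j = 0) ->
    sc_mem E x;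
  sc_linfty : forall E x, sc_mem E x -> exists M : R, forall j, `|x j| <= M;
  sc_sup_le : forall E x, sc_mem E x -> forall j, `|x j| <= sc_norm E x;
  sc_unit : forall (E : completeNormedModType R) (v : E) j, sc_norm E (unitseq v j) = `|v|
}.

Definition L_XY (X Y : seq_class) (E F : completeNormedModType R)
    (T : E -> F) : Prop :=
  bounded_op T /\ forall x, sc_mem X E x -> sc_mem Y F (T \o x).

Definition norm_XY (X Y : seq_class) (E F : completeNormedModType R)
    (T : E -> F) : \bar R :=
  ereal_sup [set (sc_norm Y F (T \o x))%:E |
               x in [set x | sc_mem X E x /\ sc_norm X E x <= 1]].

Definition finitely_determined (X : seq_class) : Prop :=
  forall (E : completeNormedModType R) (x : nat -> E),
    (sc_mem X E x <-> exists M : R, forall k, sc_norm X E (trunc k x) <= M) /\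
    (sc_mem X E x ->
       (sc_norm X E x)%:E = ereal_sup (range (fun k => (sc_norm X E (trunc k x))%:E))).

Definition closed_subclass (X Z : seq_class) (E : completeNormedModType R) : Prop :=
  (forall x, sc_mem X E x -> sc_mem Z E x /\ sc_norm X E x = sc_norm Z E x) /\
  (forall (u : nat -> nat -> E) (z : nat -> E),
     (forall n, sc_mem X E (u n)) -> sc_mem Z E z ->
     (fun n => sc_norm Z E (fun j => u n j - z j)) @ \oo --> (0 : R) ->
     sc_mem X E z).

Definition finitely_dominated (X : seq_class) : Prop :=
  exists Z : seq_class, finitely_determined Z /\
    (forall E, closed_subclass X Z E) /\
    ((forall (E : completeNormedModType R) (x : nat -> E), sc_mem Z E x ->
        (sc_mem X E x <-> (fun k => sc_norm Z E (tail k x)) @ \oo --> (0 : R)))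
     \/
     (forall (E : completeNormedModType R) (x : nat -> E), sc_mem Z E x ->
        (sc_mem X E x <-> forall eps : R, 0 < eps -> exists N, forall k l,
            (N <= k)%N -> (k <= l)%N -> sc_norm Z E (block k l x) < eps))).

Definition finitely_injective (X : seq_class) : Prop :=
  forall (E G : completeNormedModType R) (i : E -> G), metric_injection i ->
    forall (k : nat) (x : nat -> E),
      sc_norm X E (trunc k x) <= sc_norm X G (trunc k (i \o x)).

Definition banach_op_ideal
    (I : forall E F : completeNormedModType R, set (E -> F))
    (N : forall E F : completeNormedModType R, (E -> F) -> \bar R) : Prop :=
  (forall (E F : completeNormedModType R) (T : E -> F), I E F T -> bounded_op T) /\
  (forall E F, I E F (fun _ => 0)) /\
  (forall (E F : completeNormedModType R) (S T : E -> F), I E F S -> I E F T -> I E F (fun x => S x + T x)) /\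
  (forall (E F : completeNormedModType R) (a : R) (T : E -> F), I E F T -> I E F (fun x => a *: T x)) /\
  (forall (E F : completeNormedModType R) (T : E -> F), I E F T -> N E F T \is a fin_num /\ (0 <= N E F T)%E) /\
  (forall (E F : completeNormedModType R) (T : E -> F), I E F T -> N E F T = 0%E -> T = (fun _ => 0)) /\
  (forall (E F : completeNormedModType R) (a : R) (T : E -> F), I E F T ->
     N E F (fun x => a *: T x) = (`|a|%:E * N E F T)%E) /\
  (forall (E F : completeNormedModType R) (S T : E -> F), I E F S -> I E F T ->
     (N E F (fun x => (S x + T x)%R) <= N E F S + N E F T)%E) /\
  (forall (E F : completeNormedModType R) (u : nat -> E -> F), (forall n, I E F (u n)) ->
     (forall eps : R, 0 < eps -> exists M, forall m n, (M <= m)%N -> (M <= n)%N ->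
        (N E F (fun x => (u m x - u n x)%R) < eps%:E)%E) ->
     exists T, I E F T /\
       forall eps : R, 0 < eps -> exists M, forall n, (M <= n)%N ->
         (N E F (fun x => (u n x - T x)%R) < eps%:E)%E) /\
  (forall (E F : completeNormedModType R) (phi : E -> R^o) (y : F), bounded_op phi ->
     I E F (fun x => phi x *: y) /\
     N E F (fun x => phi x *: y) = (opnorm phi * (`|y|)%:E)%E) /\
  (forall (D E F G : completeNormedModType R) (B : D -> E) (T : E -> F) (A : F -> G),
     bounded_op B -> I E F T -> bounded_op A ->
     I D G (A \o T \o B) /\
     (N D G (A \o T \o B) <= opnorm A * N E F T * opnorm B)%E).

Definition injective_ideal
    (I : forall E F : completeNormedModType R, set (E -> F))
    (N : forall E F : completeNormedModType R, (E -> F) -> \bar R) : Prop :=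
  forall (E F G : completeNormedModType R) (T : E -> F) (i : F -> G),
    bounded_op T -> metric_injection i -> I E G (i \o T) ->
    I E F T /\ N E F T = N E G (i \o T).

End SeqClasses.

(* The heart of the argument is that Y-membership and the Y-norm pull back
   along i: if (i y_j) lies in Y(G) then (y_j) lies in Y(F) with
   ||(y_j)||_Y <= ||(i y_j)||_Y.  Writing Z for a finitely determined class
   dominating Y, finite injectivity of Y controls the finite sections of y
   in Z(F) by those of i o y, so y lies in Z(F) with a smaller norm
   (Z_pullback); the tail/block criterion defining Y inside Z then transfers
   from i o y to y, because i commutes with cutting a sequence
   (Y_mem_pullback_tail, Y_mem_pullback_block).  Applied to y = T o x this
   gives T in L_{X;Y} and ||T||_{X;Y} <= ||i o T||_{X;Y}; the reverse
   inequality is the ideal property, since i has operator norm at most 1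
   (ideal_norm_comp_contraction). *)
From HB Require Import structures.
From mathcomp Require Import all_boot all_order all_algebra.
From mathcomp Require Import all_classical all_reals all_analysis.
Import Order.TTheory GRing.Theory Num.Theory.
Import numFieldNormedType.Exports.
Local Open Scope classical_set_scope.
Local Open Scope ring_scope.

Section MetricInjections.
Context {R : realType} {F G : normedModType R} (i : F -> G).
Hypothesis i_inj : metric_injection i.

Lemma metric_injection0 : i 0 = 0.
Proof. by apply/normr0_eq0; rewrite (proj2 i_inj) normr0. Qed.

Lemma metric_injectionB x y : i (x - y) = i x - i y.
Proof.
have := proj1 i_inj (-1) y x.
by rewrite scaleN1r addrC => ->; rewrite scaleN1r addrC.
Qed.

(* An isometry is 1-Lipschitz, hence a bounded operator. *)
Lemma metric_injection_bounded : bounded_op i.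
Proof.
split; first exact: (proj1 i_inj).
move=> x; apply/cvgrPdist_lt => e e0.
move: (@cvg_id _ (nbhs x)) => /cvgrPdist_lt /(_ e e0).
by apply: filterS => y /=; rewrite -metric_injectionB (proj2 i_inj).
Qed.

Lemma comp_tail k (y : nat -> F) : i \o tail k y = tail k (i \o y).
Proof.
by apply: funext => j; rewrite /tail /=; case: ifP => // _; rewrite metric_injection0.
Qed.

Lemma comp_block k l (y : nat -> F) : i \o block k l y = block k l (i \o y).
Proof.
by apply: funext => j; rewrite /block /=; case: ifP => // _; rewrite metric_injection0.
Qed.

End MetricInjections.

Section OperatorNorm.
Context {R : realType}.

Lemma opnorm_ge0 (E F : normedModType R) (f : E -> F) : (0 <= opnorm f)%E.
Proof.
apply: le_trans (_ : (`|f 0|)%:E <= _)%E; first by rewrite lee_fin.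
by apply: ereal_sup_ubound; exists 0 => //=; rewrite normr0 ler01.
Qed.

Lemma opnorm_le1 (E F : normedModType R) (f : E -> F) :
  (forall x, `|f x| <= `|x|) -> (opnorm f <= 1)%E.
Proof.
move=> Hf; apply: ge_ereal_sup => _ [x /= x1 <-].
by rewrite lee_fin; apply: le_trans (Hf x) x1.
Qed.

Lemma ideal_norm_comp_contraction
    {I : forall E F : completeNormedModType R, set (E -> F)}
    {N : forall E F : completeNormedModType R, (E -> F) -> \bar R}
    {E F G : completeNormedModType R} {T : E -> F} {A : F -> G} :
  banach_op_ideal I N -> I E F T -> bounded_op A ->
  (forall y, `|A y| <= `|y|) -> (N E G (A \o T) <= N E F T)%E.
Proof.
move=> [_ [_ [_ [_ [N_nonneg [_ [_ [_ [_ [_ ideal]]]]]]]]]] IT bA A1.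
have bid : bounded_op (@id E).
  by split; [move=> ? ? ?|move=> ?; exact: cvg_id].
have [_ NATid] := ideal E E F G id T A bid IT bA.
apply: le_trans (NATid : (N E G (A \o T \o id) <= _)%E) _.
have NT0 := proj2 (N_nonneg E F T IT).
have A0 := opnorm_ge0 _ _ A; have id0 := opnorm_ge0 _ _ (@id E).
have nA1 : (opnorm A <= 1)%E by exact: opnorm_le1.
have nid1 : (opnorm (@id E) <= 1)%E by apply: opnorm_le1.
rewrite -[leRHS]mule1; apply: lee_pmul => //; first exact: mule_ge0.
by rewrite -[leRHS]mul1e; apply: lee_pmul.
Qed.

End OperatorNorm.

Section SequenceSurgery.
Context {R : realType} (Y : @seq_class R) {E : completeNormedModType R}.

(* Finite sections and blocks are finitely supported, hence in every class. *)
Lemma trunc_mem k (w : nat -> E) : sc_mem Y E (trunc k w).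
Proof. by apply: sc_c00; exists k => j jk; rewrite /trunc ltnNge jk. Qed.

Lemma block_mem k l (w : nat -> E) : sc_mem Y E (block k l w).
Proof.
apply: sc_c00; exists l.+1 => j lj; rewrite /block.
by case: ifP => // /andP [_ jl]; move: lj; rewrite ltnNge jl.
Qed.

(* A tail of w is w minus a finite section of w. *)
Lemma tail_mem k (w : nat -> E) : sc_mem Y E w -> sc_mem Y E (tail k w).
Proof.
move=> Yw.
have -> : tail k w = fun j => w j + (-1) *: trunc k w j.
  apply: funext => j; rewrite /tail /trunc; case: ifP => _.
    by rewrite scaleN1r subrr.
  by rewrite scaler0 addr0.
by apply: sc_memD => //; apply: sc_memZ; apply: trunc_mem.
Qed.

End SequenceSurgery.

Section Pullback.
Context {R : realType} {Y Z : @seq_class R}.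
Hypothesis Z_det : finitely_determined Z.
Hypothesis YZ : forall E, closed_subclass Y Z E.
Hypothesis Y_inj : finitely_injective Y.
Context {F G : completeNormedModType R} {i : F -> G}.
Hypothesis i_inj : metric_injection i.

(* Z-membership and the Z-norm pull back along i: every finite section of y
   has Z-norm (= Y-norm) at most that of i o y. *)
Lemma Z_pullback {y : nat -> F} : sc_mem Z G (i \o y) ->
  sc_mem Z F y /\ sc_norm Z F y <= sc_norm Z G (i \o y).
Proof.
move=> Ziy.
have trunc_le k : sc_norm Z F (trunc k y) <= sc_norm Z G (i \o y).
  rewrite -(proj2 (proj1 (YZ F) _ (trunc_mem Y k y))).
  apply: le_trans (Y_inj F G i i_inj k y) _.
  rewrite (proj2 (proj1 (YZ G) _ (trunc_mem Y k (i \o y)))).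
  rewrite -lee_fin (proj2 (Z_det G (i \o y)) Ziy).
  by apply: ereal_sup_ubound; exists k.
have Zy : sc_mem Z F y by apply/(proj1 (Z_det F y)); exists (sc_norm Z G (i \o y)).
split=> //; rewrite -lee_fin (proj2 (Z_det F y) Zy).
by apply: ge_ereal_sup => _ [k _ <-]; rewrite lee_fin.
Qed.

Lemma Z_norm_pullback {w : nat -> F} : sc_mem Z G (i \o w) ->
  sc_norm Z F w <= sc_norm Z G (i \o w).
Proof. by move=> /Z_pullback []. Qed.

(* Y described inside Z by vanishing tails: the tails of y are dominated by
   those of i o y, which tend to 0. *)
Lemma Y_mem_pullback_tail (y : nat -> F) :
  (forall (E : completeNormedModType R) (x : nat -> E), sc_mem Z E x ->
     (sc_mem Y E x <-> (fun k => sc_norm Z E (tail k x)) @ \oo --> (0 : R))) ->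
  sc_mem Y G (i \o y) -> sc_mem Y F y.
Proof.
move=> Y_tail Yiy.
have Ziy := proj1 (proj1 (YZ G) _ Yiy).
have Zy := proj1 (Z_pullback Ziy).
apply/(Y_tail F y Zy).
apply: (@squeeze_cvgr _ _ _ _ (fun=> 0) (fun k => sc_norm Z G (tail k (i \o y))));
  last 2 first.
- exact: cvg_cst.
- exact: (proj1 (Y_tail G _ Ziy) Yiy).
apply: nearW => k.
have Zt : sc_mem Z G (i \o tail k y).
  by rewrite comp_tail //; apply: tail_mem.
rewrite sc_norm_ge0 /=; last exact: tail_mem.
by rewrite -(comp_tail i) //; exact: Z_norm_pullback Zt.
Qed.

(* Y described inside Z by a Cauchy condition on blocks: the blocks of y are
   dominated by those of i o y. *)
Lemma Y_mem_pullback_block (y : nat -> F) :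
  (forall (E : completeNormedModType R) (x : nat -> E), sc_mem Z E x ->
     (sc_mem Y E x <-> forall eps : R, 0 < eps -> exists N, forall k l,
        (N <= k)%N -> (k <= l)%N -> sc_norm Z E (block k l x) < eps)) ->
  sc_mem Y G (i \o y) -> sc_mem Y F y.
Proof.
move=> Y_block Yiy.
have Ziy := proj1 (proj1 (YZ G) _ Yiy).
apply/(Y_block F y (proj1 (Z_pullback Ziy))) => eps eps0.
have [N HN] := proj1 (Y_block G _ Ziy) Yiy eps eps0.
exists N => k l Nk kl; apply: le_lt_trans (HN k l Nk kl).
rewrite -(comp_block i) //; apply: Z_norm_pullback.
by rewrite comp_block //; apply: block_mem.
Qed.

End Pullback.

Lemma Y_pullback {R : realType} {Y : @seq_class R}
    {F G : completeNormedModType R} {i : F -> G} :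
  finitely_dominated Y -> finitely_injective Y -> metric_injection i ->
  forall y : nat -> F, sc_mem Y G (i \o y) ->
  sc_mem Y F y /\ sc_norm Y F y <= sc_norm Y G (i \o y).
Proof.
move=> [Z [Z_det [YZ criterion]]] Y_inj i_inj y Yiy.
have Yy : sc_mem Y F y.
  by case: criterion => [Y_tail|Y_block];
    [exact: (Y_mem_pullback_tail Z_det YZ Y_inj i_inj y Y_tail)
    |exact: (Y_mem_pullback_block Z_det YZ Y_inj i_inj y Y_block)].
split=> //.
rewrite (proj2 (proj1 (YZ F) _ Yy)) (proj2 (proj1 (YZ G) _ Yiy)).
exact: (Z_norm_pullback Z_det YZ Y_inj i_inj (proj1 (proj1 (YZ G) _ Yiy))).
Qed.

Theorem lemma3p8 (R : realType) (X Y : @seq_class R) :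
  finitely_dominated X -> finitely_dominated Y -> finitely_injective Y ->
  banach_op_ideal (L_XY X Y) (norm_XY X Y) ->
  forall (E F G : completeNormedModType R) (T : E -> F) (i : F -> G),
    bounded_op T -> metric_injection i -> L_XY X Y E G (i \o T) ->
    L_XY X Y E F T /\ norm_XY X Y E F T = norm_XY X Y E G (i \o T).
Proof.
move=> _ Y_dom Y_inj ideal E F G T i bT i_inj [_ iT_XY].
have pull x (Xx : sc_mem X E x) := Y_pullback Y_dom Y_inj i_inj (T \o x) (iT_XY x Xx).
have T_XY : L_XY X Y E F T by split=> // x /pull [].
split=> //; apply/eqP; rewrite eq_le; apply/andP; split.
- apply: ge_ereal_sup => _ [x [Xx x1] <-].
  apply: le_trans (_ : (sc_norm Y G (i \o T \o x))%:E <= _)%E.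
    by rewrite lee_fin; case: (pull x Xx).
  by apply: ereal_sup_ubound; exists x.
- have i_le y : `|i y| <= `|y| by rewrite (proj2 i_inj).
  have iT_le := ideal_norm_comp_contraction ideal T_XY (metric_injection_bounded i i_inj) i_le.
  by apply: le_trans iT_le _.
Qed.
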